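(* Let $n$ be a positive integer, let $u:2^{[n]}\to\mathbb{R}_{\ge 0}$ be a normalized ($u(\emptyset)=0$), monotone, submodular set function, and let $c:2^{[n]}\to\mathbb{R}_{\ge 0}$ be given by $c(S)=\sum_{i\in S}c_i$ for positive costs $c_1,\dots,c_n>0$. Then any permutation of $[n]$ that orders the elements $i\in[n]$ in non-decreasing order of $c(\{i\})$ is an $n$-approximate solution to Min-Sum Submodular Cover on $(u,c)$; that is, its objective value is at most $n$ times the minimum objective value over all permutations of $[n]$.
   Context: $[n]=\{1,\dots,n\}$. Min-Sum Submodular Cover on $(u,c)$: find a permutation of $[n]$ minimizing $\sum_{i=1}^n c(S_i)\,(u(S_i)-u(S_{i-1}))$, where $S_i$ is the set of the first $i$ elements of the permutation and $S_0=\emptyset$. A set function $u$ is monotone if $u(S\cup\{i\})\ge u(S)$ and submodular if $u(S\cup\{i\})-u(S)\ge u(S\cup\{i,j\})-u(S\cup\{j\})$ for all $S\subseteq[n]$, $i,j\notin S$. *)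

(* Ground set [n] is represented by 'I_n (elements 0..n-1). *)
From mathcomp Require Import all_boot all_order all_algebra all_fingroup.
Set Implicit Arguments. Unset Strict Implicit. Unset Printing Implicit Defensive.
Import Order.TTheory GRing.Theory Num.Theory.
Local Open Scope ring_scope.

Definition prefix (n : nat) (s : 'S_n) (k : nat) : {set 'I_n} :=
  [set s j | j : 'I_n & (j < k)%N].

Definition mssc_obj (R : numDomainType) (n : nat)
  (u c : {set 'I_n} -> R) (s : 'S_n) : R :=
  \sum_(i < n) c (prefix s i.+1) * (u (prefix s i.+1) - u (prefix s i)).

Definition normalized (R : numDomainType) (n : nat) (u : {set 'I_n} -> R) :=
  u set0 = 0.

Definition monotone_sf (R : numDomainType) (n : nat) (u : {set 'I_n} -> R) :=
  forall (S : {set 'I_n}) (i : 'I_n), u S <= u (i |: S).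

Definition submodular_sf (R : numDomainType) (n : nat) (u : {set 'I_n} -> R) :=
  forall (S : {set 'I_n}) (i j : 'I_n), i \notin S -> j \notin S ->
    u (i |: S) - u S >= u (i |: (j |: S)) - u (j |: S).

Definition add_cost (R : numDomainType) (n : nat) (ci : 'I_n -> R)
  : {set 'I_n} -> R := fun S => \sum_(i in S) ci i.

From Pilot Require Import Defs.
From mathcomp Require Import all_boot all_order all_algebra all_fingroup.
Import Order.TTheory GRing.Theory Num.Theory.
Local Open Scope ring_scope.
Local Notation prefix := Defs.prefix.

(* Since the costs increase along s, the prefix cost c(S_i) is at most n times
   the cost of the i-th element, so the objective of s is at most n times the
   "own-cost" objective in which every element only pays its own cost times its
   marginal utility.  Summation by parts writes the own-cost objective of s, and
   the objective of any permutation t, as nonnegative combinations of residuals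
   u([n]) - u(prefix): s pays each increment of the sorted costs at one residual
   of its own, while t pays it at the first position where t leaves the
   corresponding prefix of s, and there the residual of t is at least that of s
   by monotonicity. *)

Lemma summation_by_parts {R : pzRingType} (a f : nat -> R) (m : nat) :
  a 0%N = 0 ->
  \sum_(k < m) a k.+1 * (f k.+1 - f k) =
  \sum_(k < m) (a k.+1 - a k) * (f m - f k).
Proof.
move=> a0; elim: m => [|m IH]; first by rewrite !big_ord0.
have sum_steps : \sum_(k < m.+1) (a k.+1 - a k) = a m.+1.
  by rewrite -(big_mkord xpredT (fun k => a k.+1 - a k)) telescope_sumr // a0 subr0.
have -> : \sum_(k < m.+1) (a k.+1 - a k) * (f m.+1 - f k) =
    \sum_(k < m.+1) (a k.+1 - a k) * (f m.+1 - f m) +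
    \sum_(k < m.+1) (a k.+1 - a k) * (f m - f k).
  by rewrite -big_split /=; apply: eq_bigr => k _; rewrite -mulrDr addrA subrK.
rewrite big_ord_recr /= IH -mulr_suml sum_steps big_ord_recr /=.
by rewrite subrr mulr0 addr0 addrC.
Qed.

Section Prefix.
Context {n : nat} (s : 'S_n).

Lemma mem_prefix k x : (x \in prefix s k) = ((s^-1)%g x < k)%N.
Proof.
apply/imsetP/idP => [[j]|lt_x_k]; first by rewrite inE => lt_j_k ->; rewrite permK.
by exists ((s^-1)%g x); rewrite ?inE ?permKV.
Qed.

Lemma prefix0 : prefix s 0 = set0.
Proof. by apply/setP => x; rewrite mem_prefix inE. Qed.

Lemma prefixT : prefix s n = setT.
Proof. by apply/setP => x; rewrite mem_prefix inE ltn_ord. Qed.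

Lemma notin_prefix (k : 'I_n) : s k \notin prefix s k.
Proof. by rewrite mem_prefix permK ltnn. Qed.

Lemma prefixS (k : 'I_n) : prefix s k.+1 = s k |: prefix s k.
Proof.
apply/setP => x; rewrite !inE !mem_prefix ltnS leq_eqVlt.
by rewrite -[_ == _ :> nat]/(_ == k) (canF_eq (permKV s)).
Qed.

Lemma prefix_subset k l : (k <= l)%N -> prefix s k \subset prefix s l.
Proof.
move=> le_kl; apply/subsetP => x; rewrite !mem_prefix => lt_x_k.
exact: leq_trans lt_x_k le_kl.
Qed.

End Prefix.

Lemma prefix_exit {n : nat} (s t : 'S_n) (k : 'I_n) :
  exists2 j : 'I_n, t j \notin prefix s k & prefix t j \subset prefix s k.
Proof.
have out : t ((t^-1)%g (s k)) \notin prefix s k by rewrite permKV notin_prefix.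
case: (arg_minnP (P := fun j => t j \notin prefix s k) val out) => j tj_out j_min.
exists j => //; apply/subsetP => x; rewrite mem_prefix; apply: contraTT => x_out.
by rewrite -leqNgt; apply: j_min; rewrite permKV.
Qed.

Lemma monotone_sf_subset {R : numDomainType} {n : nat} {u : {set 'I_n} -> R}
    (u_mono : monotone_sf u) (S T : {set 'I_n}) :
  S \subset T -> u S <= u T.
Proof.
move=> /setUidPr <-; rewrite -(set_enum T).
elim: (enum T) => [|x r IH]; first by rewrite set_nil setU0.
by rewrite set_cons setUCA; apply: le_trans IH (u_mono _ _).
Qed.

Lemma mssc_obj_add_cost {R : numDomainType} {n : nat} (u : {set 'I_n} -> R)
    (ci : 'I_n -> R) (t : 'S_n) :
  mssc_obj u (add_cost ci) t = \sum_(j < n) ci (t j) * (u setT - u (prefix t j)).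
Proof.
rewrite /mssc_obj (summation_by_parts (fun k => add_cost ci (prefix t k))
  (fun k => u (prefix t k))) /=; last by rewrite prefix0 /add_cost big_set0.
apply: eq_bigr => j _; rewrite prefixT prefixS /add_cost.
by rewrite big_setU1 ?notin_prefix // addrK.
Qed.

Definition own_cost_obj {R : numDomainType} {n : nat} (u : {set 'I_n} -> R)
    (ci : 'I_n -> R) (t : 'S_n) : R :=
  \sum_(k < n) ci (t k) * (u (prefix t k.+1) - u (prefix t k)).

Section SortedOrder.
Context {R : numDomainType} {n : nat} {u : {set 'I_n} -> R} {ci : 'I_n -> R}.
Context {s : 'S_n}.
Hypothesis u_mono : monotone_sf u.
Hypothesis ci_ge0 : forall i, 0 <= ci i.
Hypothesis s_sorted : forall j k : 'I_n, (j <= k)%N -> ci (s j) <= ci (s k).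

(* [cost_level k] is the cost of the k-th element of s counted from 1, and 0
   for k = 0 (and past n). *)
Definition cost_level (k : nat) : R :=
  if k is k'.+1 then oapp (ci \o s) 0 (insub k') else 0.

Lemma cost_levelS (k : 'I_n) : cost_level k.+1 = ci (s k).
Proof. by rewrite /= valK. Qed.

Lemma cost_level_step_ge0 (k : 'I_n) : 0 <= cost_level k.+1 - cost_level k.
Proof.
rewrite subr_ge0 cost_levelS; case: k => [[|k] lt_kn]; first exact: ci_ge0.
by rewrite [cost_level _](cost_levelS (Ordinal (ltnW lt_kn))) s_sorted.
Qed.

Lemma cost_as_levels x :
  ci x = \sum_(k < n | x \notin prefix s k) (cost_level k.+1 - cost_level k).
Proof.
under eq_bigl => k do rewrite mem_prefix -leqNgt -ltnS.
rewrite -(big_ord_widen n (fun k => cost_level k.+1 - cost_level k)) //.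
by rewrite -(big_mkord xpredT (fun k => cost_level k.+1 - cost_level k))
  telescope_sumr // subr0 cost_levelS permKV.
Qed.

Lemma prefix_cost_le (k : 'I_n) : add_cost ci (prefix s k.+1) <= n%:R * ci (s k).
Proof.
apply: (@le_trans _ _ (\sum_(x in prefix s k.+1) ci (s k))).
  apply: ler_sum => x; rewrite mem_prefix ltnS => /s_sorted.
  by rewrite permKV.
rewrite sumr_const mulr_natl; apply: ler_wpMn2l => //.
by apply: leq_trans (max_card _) _; rewrite card_ord.
Qed.

Lemma mssc_obj_le_own_cost :
  mssc_obj u (add_cost ci) s <= n%:R * own_cost_obj u ci s.
Proof.
rewrite /mssc_obj /own_cost_obj mulr_sumr; apply: ler_sum => k _.
rewrite mulrA; apply: ler_wpM2r; last exact: prefix_cost_le.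
by rewrite subr_ge0 (monotone_sf_subset u_mono) ?prefix_subset.
Qed.

Lemma own_cost_obj_by_parts :
  own_cost_obj u ci s =
  \sum_(k < n) (cost_level k.+1 - cost_level k) * (u setT - u (prefix s k)).
Proof.
rewrite /own_cost_obj -(prefixT s).
under eq_bigr => k _ do rewrite -cost_levelS.
exact: (summation_by_parts cost_level (fun k => u (prefix s k))).
Qed.

Lemma own_cost_obj_le_mssc_obj t :
  own_cost_obj u ci s <= mssc_obj u (add_cost ci) t.
Proof.
have residual_ge0 T : 0 <= u setT - u T.
  by rewrite subr_ge0 (monotone_sf_subset u_mono) ?subsetT.
rewrite own_cost_obj_by_parts mssc_obj_add_cost.
under [X in _ <= X]eq_bigr => j _ do rewrite cost_as_levels mulr_suml big_mkcond.
rewrite exchange_big /=; apply: ler_sum => k _.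
have [j tj_out sub_tj] := prefix_exit s t k.
rewrite (bigD1 j) //= tj_out -[X in X <= _]addr0; apply: lerD.
  apply: ler_wpM2l; first exact: cost_level_step_ge0.
  by rewrite lerD2l lerN2 (monotone_sf_subset u_mono).
apply: sumr_ge0 => i _; case: ifP => // _.
by rewrite mulr_ge0 ?cost_level_step_ge0 ?residual_ge0.
Qed.

End SortedOrder.

Theorem theorem3 (R : realFieldType) (n : nat) (n_pos : (0 < n)%N)
  (u : {set 'I_n} -> R) (ci : 'I_n -> R)
  (u_ge0 : forall S, 0 <= u S)
  (u_norm : normalized u) (u_mono : monotone_sf u) (u_sub : submodular_sf u)
  (ci_pos : forall i, 0 < ci i)
  (s : 'S_n)
  (s_sorted : forall j k : 'I_n, (j <= k)%N ->
     add_cost ci [set s j] <= add_cost ci [set s k]) :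
  forall t : 'S_n,
    mssc_obj u (add_cost ci) s <= n%:R * mssc_obj u (add_cost ci) t.
Proof.
move=> t.
have ci_ge0 i : 0 <= ci i := ltW (ci_pos i).
have sorted (j k : 'I_n) : (j <= k)%N -> ci (s j) <= ci (s k).
  by move/s_sorted; rewrite /add_cost !big_set1.
apply: le_trans (mssc_obj_le_own_cost u_mono ci_ge0 sorted) _.
apply: ler_wpM2l; first exact: ler0n.
exact: own_cost_obj_le_mssc_obj u_mono ci_ge0 sorted t.
Qed.
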